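(* Let $G$ be a locally compact Abelian group and $(G, \mathbb{R}^d \times H_1, \mathcal{L})$ a cut and project scheme, with $H_1$ a locally compact Abelian group. For $h$ on $\mathbb R^d\times H_1$ write $\omega_h=\sum_{(x,x^\star)\in\mathcal L}h(x^\star)\delta_x$. (i) If $\phi \in \mathcal{S}(\mathbb{R}^d)$, $\psi \in C_c(H_1)$ and $h=\phi \otimes \psi$, then $\omega_h$ is a measure (i.e. $\sum_{x\in L\cap K}|h(x^\star)|<\infty$ for every compact $K\subseteq G$). (ii) For each compact $K \subseteq G$ and compact $W \subseteq H_1$ there exists a constant $C=C(K,W)$ such that for all $\phi \in \mathcal{S}(\mathbb{R}^d)$ and $\psi \in C_c(H_1)$ with $\operatorname{supp}(\psi) \subseteq W$, \[ \| \omega_{\phi \otimes \psi} \|_K \leq C \|\psi\|_\infty \big\| (1+|x|^{2d}) \phi(x) \big\|_\infty . \]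
   Context: Cut and project scheme $(G,H,\mathcal L)$: $\mathcal L\subseteq G\times H$ a lattice (discrete co-compact subgroup) with $\pi_H(\mathcal L)$ dense in $H$ and $\pi_G|_{\mathcal L}$ injective; $L=\pi_G(\mathcal L)$ and $\mathcal L=\{(x,x^\star):x\in L\}$. $\mathcal S(\mathbb R^d)$ is the Schwartz space; $(\phi\otimes\psi)(x,y)=\phi(x)\psi(y)$. For a measure $\mu$ and compact $K$, $\|\mu\|_K=\sup_{t\in G}|\mu|(t+K)$. *)

From HB Require Import structures.
From mathcomp Require Import all_boot all_order all_algebra.
From mathcomp Require Import all_classical all_reals all_analysis.
Set Implicit Arguments. Unset Strict Implicit. Unset Printing Implicit Defensive.
Import Order.TTheory GRing.Theory Num.Theory.
Import numFieldNormedType.Exports.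
Local Open Scope classical_set_scope.
Local Open Scope ring_scope.

Definition LCA_space (T : topologicalType) : Prop :=
  hausdorff_space T /\ forall x : T, exists U : set T, nbhs x U /\ compact U.

Definition lattice_in (X : zmodType) (nb : X -> set_system X)
  (compactX : set X -> Prop) (Lat : set X) : Prop :=
  [/\ Lat 0, (forall a b, Lat a -> Lat b -> Lat (a - b)),
      (forall z, Lat z -> exists U, nb z U /\ U `&` Lat = [set z])
    & exists K, compactX K /\ forall w, exists l k, Lat l /\ K k /\ w = l + k].

Definition cut_and_project_scheme (R : realType) (d : nat)
  (G H1 : topologicalZmodType) (Lat : set (G * ('rV[R]_d * H1))) : Prop :=
  [/\ LCA_space G, LCA_space H1,
      lattice_in (@nbhs _ (G * ('rV[R]_d * H1))%type)
                 (@compact (G * ('rV[R]_d * H1))%type) Lat,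
      dense [set z.2 | z in Lat]
    & {in Lat &, forall z w, z.1 = w.1 -> z = w}].

Definition eucl2 (R : realType) (d : nat) (x : 'rV[R]_d) : R :=
  \sum_(i < d) (x ord0 i) ^+ 2.

Definition cmod (R : realType) (a b : R) : R := Num.sqrt (a ^+ 2 + b ^+ 2).

Fixpoint dpartial (R : realType) (d : nat) (s : seq 'I_d)
  (f : 'rV[R]_d -> R) : 'rV[R]_d -> R :=
  match s with
  | [::] => f
  | i :: s' => 'D_(delta_mx 0 i) (dpartial s' f)
  end.

Definition schwartz_real (R : realType) (d : nat) (f : 'rV[R]_d -> R) : Prop :=
  forall s : seq 'I_d,
    [/\ continuous (dpartial s f),
        (forall (i : 'I_d) (x : 'rV[R]_d), derivable (dpartial s f) x (delta_mx 0 i))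
      & forall n : nat, exists C : R, forall x : 'rV[R]_d,
          (1 + eucl2 x) ^+ n * `|dpartial s f x| <= C].

(* A complex function phi = phire + i phiim is in S(R^d) iff both parts are. *)
Definition schwartz (R : realType) (d : nat) (phire phiim : 'rV[R]_d -> R) :=
  schwartz_real phire /\ schwartz_real phiim.

Definition csupp (T : topologicalType) (R : realType) (psire psiim : T -> R) : set T :=
  closure [set v | psire v != 0 \/ psiim v != 0].

Definition Cc (T : topologicalType) (R : realType) (psire psiim : T -> R) : Prop :=
  [/\ continuous psire, continuous psiim & compact (csupp psire psiim)].

Local Open Scope ereal_scope.

Definition csup_norm (T : Type) (R : realType) (fre fim : T -> R) : \bar R :=
  ereal_sup (range (fun x => (cmod (fre x) (fim x))%:E)).

(* |omega_h|(A) for h on H = R^d x H1, omega_h = sum_{z in Lat} h(z.2) delta_{z.1} *)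
Definition omega_abs (R : realType) (G H : choiceType) (Lat : set (G * H))
  (habs : H -> R) (A : set G) : \bar R :=
  \esum_(z in [set z | Lat z /\ A z.1]) (habs z.2)%:E.

Definition omega_normK (R : realType) (G : zmodType) (H : choiceType) (Lat : set (G * H))
  (habs : H -> R) (K : set G) : \bar R :=
  ereal_sup (range (fun t : G => omega_abs Lat habs [set (t + k)%R | k in K])).

Definition tensor_abs (R : realType) (d : nat) (H1 : Type)
  (phire phiim : 'rV[R]_d -> R) (psire psiim : H1 -> R) (uv : 'rV[R]_d * H1) : R :=
  (cmod (phire uv.1) (phiim uv.1) * cmod (psire uv.2) (psiim uv.2))%R.

From HB Require Import structures.
From mathcomp Require Import all_boot all_order all_algebra.
From mathcomp Require Import all_classical all_reals all_analysis.
From mathcomp Require Import finmap ring lra.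
Import Order.TTheory GRing.Theory Num.Theory.
Import numFieldNormedType.Exports.
Local Open Scope classical_set_scope.
Local Open Scope ring_scope.
Set Implicit Arguments. Unset Strict Implicit. Unset Printing Implicit Defensive.

(* Discreteness of the lattice bounds, uniformly in x, the number N of lattice
   points z with z - x in the compact set K x [-1,1]^d x W.  Cutting a cube into
   its 2^d orthants, the same count for K x [-2^j,2^j]^d x W is at most 2^(dj) N.
   Writing |phi(u)| = |(1+|u|^(2d)) phi(u)| / (1+|u|^(2d)) and using that
   1/(1+|u|^(2d)) <= 2^(-(d+1)j) off [-2^j,2^j]^d, a dyadic decomposition bounds
   the sum of |phi(z.2.1)| |psi(z.2.2)| over the lattice points of any translate
   of K by N (1 + 2^(d+1)) ||psi||_oo ||(1+|u|^(2d)) phi||_oo.  This is (ii), and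
   (i) follows because both sup norms are finite for phi in S and psi in C_c. *)

Lemma sum_indic_seq (T : Type) (R : pzRingType) (A : set T) (s : seq T) :
  \sum_(x <- s) (\1_A x : R) = (count (mem A) s)%:R.
Proof.
rewrite -sum1_count natr_sum [RHS]big_mkcond /=.
by apply: eq_bigr => x _; rewrite indicE; case: (x \in A).
Qed.

Section ComplexValuedFunctions.
Variable R : realType.
Implicit Types a b c : R.

Lemma cmod_ge0 a b : 0 <= cmod a b.
Proof. exact: sqrtr_ge0. Qed.

Lemma cmod00 : cmod 0 0 = 0 :> R.
Proof. by rewrite /cmod expr0n /= addr0 sqrtr0. Qed.

Lemma cmodM c a b : cmod (c * a) (c * b) = `|c| * cmod a b.
Proof. by rewrite /cmod !exprMn -mulrDr sqrtrM ?sqr_ge0 // sqrtr_sqr. Qed.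

Lemma cmod_le a b : cmod a b <= `|a| + `|b|.
Proof.
rewrite /cmod -(ger0_norm (addr_ge0 (normr_ge0 a) (normr_ge0 b))) -sqrtr_sqr.
have ab_ge0 : 0 <= `|a| * `|b| *+ 2 by rewrite mulrn_wge0 // mulr_ge0.
rewrite ler_sqrt ?sqr_ge0 // sqrrD !real_normK ?num_real //; lra.
Qed.

Lemma csup_norm_ub (T : Type) (f g : T -> R) x :
  ((cmod (f x) (g x))%:E <= csup_norm f g)%E.
Proof. by apply: ereal_sup_ubound; exists x. Qed.

(* Here and below the point x only witnesses that T is nonempty; on an empty
   type the sup norm is -oo. *)
Lemma csup_norm_ge0 (T : Type) (f g : T -> R) (x : T) : (0 <= csup_norm f g)%E.
Proof. by apply: le_trans (csup_norm_ub f g x); rewrite lee_fin cmod_ge0. Qed.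

Lemma csup_norm_le (T : Type) (f g : T -> R) M :
  (forall x, cmod (f x) (g x) <= M) -> (csup_norm f g <= M%:E)%E.
Proof. by move=> fgM; apply/ereal_supP => _ [x _ <-]; rewrite lee_fin. Qed.

Lemma csup_norm_fin_num (T : Type) (f g : T -> R) (x : T) M :
  (forall x, cmod (f x) (g x) <= M) -> csup_norm f g \is a fin_num.
Proof.
move=> fgM; rewrite ge0_fin_numE ?(csup_norm_ge0 f g x) //.
exact: le_lt_trans (csup_norm_le fgM) (ltry M).
Qed.

Lemma csupp_zero (T : topologicalType) (f g : T -> R) v :
  ~ csupp f g v -> f v = 0 /\ g v = 0.
Proof.
by move=> nv; split; apply: contra_notP nv => /eqP fgv;
  apply: subset_closure; [left | right].
Qed.

Lemma compact_support_bounded (T : topologicalType) (h : T -> R) (A : set T) :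
  continuous h -> compact A -> (forall v, ~ A v -> h v = 0) ->
  exists M, forall v, `|h v| <= M.
Proof.
move=> ch cA h0.
have [M [_ HM]] := compact_bounded (continuous_compact (continuous_subspaceT ch) cA).
exists (`|M| + 1) => v; have [Av | nAv] := pselect (A v).
  by apply: (HM (`|M| + 1)); [rewrite (le_lt_trans (ler_norm M)) ?ltrDl | exists v].
by rewrite h0 // normr0 addr_ge0.
Qed.

Lemma Cc_bounded (T : topologicalType) (f g : T -> R) :
  Cc f g -> exists M, forall v, cmod (f v) (g v) <= M.
Proof.
case=> cf cg csupp_c.
have [Mf hf] := compact_support_bounded cf csupp_c (fun v nv => (csupp_zero nv).1).
have [Mg hg] := compact_support_bounded cg csupp_c (fun v nv => (csupp_zero nv).2).
by exists (Mf + Mg) => v; rewrite (le_trans (cmod_le _ _)) // lerD.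
Qed.
End ComplexValuedFunctions.

Section ExtendedRealSums.
Variable R : realType.

Lemma ereal_bound_seq (T : eqType) (F : T -> R) (P : \bar R) (s : seq T) :
  (0 <= P)%E -> (forall z, z \in s -> ((F z)%:E <= P)%E) ->
  exists p : R, [/\ 0 <= p, (forall z, z \in s -> F z <= p) & (p%:E <= P)%E].
Proof.
move=> P_ge0 FP; exists (\big[Order.max/0]_(z <- s) F z); split.
- exact: bigmax_ge_id.
- by move=> z zs; rewrite le_bigmax_seq.
- rewrite big_seq; elim/big_rec: _ => // z p zs pP.
  by rewrite /Order.max; case: ifP => _; [exact: pP | exact: FP].
Qed.

Lemma esum_le_seq (T : choiceType) (A : set T) (f : T -> R) (B : \bar R) :
  (forall s : seq T, uniq s -> (forall z, z \in s -> A z) ->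
     ((\sum_(z <- s) f z)%:E <= B)%E) ->
  (\esum_(z in A) (f z)%:E <= B)%E.
Proof.
move=> sB; apply/ereal_supP => _ [F [finF FA] <-].
rewrite fsbig_finite //= sumEFin; apply: sB; first exact: fset_uniq.
by move=> z; rewrite in_fset_set // => /set_mem; apply: FA.
Qed.
End ExtendedRealSums.

Section DyadicDecay.
Variables (R : realType) (d : nat).
Implicit Types (u : 'rV[R]_d) (r : R).

Definition box r : set 'rV[R]_d := [set u | forall i, `|u ord0 i| <= r].

Definition decay u : R := (1 + eucl2 u ^+ d)^-1.

Lemma eucl2_ge0 u : 0 <= eucl2 u.
Proof. by apply: sumr_ge0 => i _; exact: sqr_ge0. Qed.

Lemma poly_weight_gt0 u : 0 < 1 + eucl2 u ^+ d.
Proof. by rewrite ltr_pwDl ?exprn_ge0 ?eucl2_ge0. Qed.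

Lemma poly_weight_le u : 1 + eucl2 u ^+ d <= 2 * (1 + eucl2 u) ^+ d.
Proof.
have e_ge0 := eucl2_ge0 u.
have one_le : 1 <= (1 + eucl2 u) ^+ d by rewrite exprn_ege1 // lerDl.
have pow_le : eucl2 u ^+ d <= (1 + eucl2 u) ^+ d.
  by rewrite lerXn2r ?nnegrE ?addr_ge0 // lerDr.
by rewrite mulr2n mulrDl mul1r lerD.
Qed.

Lemma decay_ge0 u : 0 <= decay u.
Proof. by rewrite invr_ge0; exact: ltW (poly_weight_gt0 u). Qed.

Lemma decay_le1 u : decay u <= 1.
Proof. by rewrite invf_le1 ?poly_weight_gt0 // lerDl exprn_ge0 ?eucl2_ge0. Qed.

Lemma cmod_decay (f g : 'rV[R]_d -> R) u :
  cmod (f u) (g u)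
  = decay u * cmod ((1 + eucl2 u ^+ d) * f u) ((1 + eucl2 u ^+ d) * g u).
Proof.
rewrite cmodM ger0_norm; last exact: ltW (poly_weight_gt0 u).
by rewrite mulrA mulVf ?mul1r // gt_eqF ?poly_weight_gt0.
Qed.

Lemma schwartz_real_weighted_bounded (f : 'rV[R]_d -> R) : schwartz_real f ->
  exists M, forall u, `|(1 + eucl2 u ^+ d) * f u| <= M.
Proof.
move=> /(_ [::]) [_ _ /(_ d) [C fC]]; exists (2 * C) => u.
rewrite normrM ger0_norm; last exact: ltW (poly_weight_gt0 u).
apply: le_trans (ler_wpM2r (normr_ge0 _) (poly_weight_le u)) _.
by rewrite -mulrA ler_wpM2l //; exact: fC.
Qed.

Lemma schwartz_weighted_bounded (f g : 'rV[R]_d -> R) : schwartz f g ->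
  exists M, forall u, cmod ((1 + eucl2 u ^+ d) * f u) ((1 + eucl2 u ^+ d) * g u) <= M.
Proof.
case=> /schwartz_real_weighted_bounded [Mf hf] /schwartz_real_weighted_bounded [Mg hg].
by exists (Mf + Mg) => u; rewrite (le_trans (cmod_le _ _)) // lerD.
Qed.

Lemma box_compact r : compact (box r).
Proof.
rewrite (_ : box r = [set v | forall i, `[- r, r]%classic (v ord0 i)]).
  by apply: (@rV_compact _ _ (fun=> `[- r, r]%classic)) => i; exact: segment_compact.
by apply/seteqP; split => v vr i; have := vr i; rewrite /= in_itv /= ler_norml.
Qed.

Lemma box_pow2_le (m n : nat) : (m <= n)%N -> box (2 ^+ m) `<=` box (2 ^+ n).
Proof. by move=> mn u + i => /(_ i) /le_trans; apply; rewrite ler_eXn2l ?ltr1n. Qed.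

Lemma box_pow2_exists u : exists J, box (2 ^+ J) u.
Proof.
pose m := \sum_i `|u ord0 i|; exists (Num.Def.truncn m).+1 => i.
have ui_le : `|u ord0 i| <= m.
  by rewrite /m (bigD1 i) //= lerDl sumr_ge0.
apply: (le_trans ui_le); apply: (le_trans (ltW (truncnS_gt m))).
by rewrite -natrX ler_nat ltnW // ltn_expl.
Qed.

Lemma box_pow2_exists_seq (us : seq 'rV[R]_d) :
  exists J, forall u, u \in us -> box (2 ^+ J) u.
Proof.
elim: us => [|u us [J HJ]]; first by exists 0%N.
have [Ju Hu] := box_pow2_exists u.
exists (maxn J Ju) => v; rewrite in_cons => /predU1P [-> | vus].
  by apply: box_pow2_le Hu; rewrite leq_maxr.
by apply: box_pow2_le (HJ v vus); rewrite leq_maxl.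
Qed.

(* The exponent d + 1, rather than the sharp 2 d, makes the terms of the dyadic
   series in [dyadic_sum_le] exactly 2^d 2^-k. *)
Lemma decay_notin_box j u : ~ box (2 ^+ j) u -> decay u <= ((2 ^+ d.+1) ^+ j)^-1.
Proof.
move=> /existsNP [i /negP]; rewrite -ltNge => lt_ui.
have d_gt0 : (0 < d)%N := leq_ltn_trans (leq0n i) (ltn_ord i).
have two_j_ge0 : 0 <= (2 : R) ^+ j by rewrite exprn_ge0.
have four_j_le : (2 ^+ j) ^+ 2 <= eucl2 u.
  apply: (@le_trans _ _ (u ord0 i ^+ 2)).
    rewrite -[u ord0 i ^+ 2]real_normK ?num_real //.
    by apply: lerXn2r; rewrite ?nnegrE ?normr_ge0 //; exact: ltW.
  rewrite /eucl2 (bigD1 i) //= lerDl.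
  by apply: sumr_ge0 => k _; exact: sqr_ge0.
rewrite /decay lef_pV2 ?posrE ?poly_weight_gt0 ?exprn_gt0 //.
apply: (@le_trans _ _ (((2 ^+ j) ^+ 2) ^+ d)); last first.
  by rewrite ler_wpDl // lerXn2r ?nnegrE ?exprn_ge0 ?eucl2_ge0.
rewrite -!exprM ler_eXn2l ?ltr1n // mulnC leq_mul2l.
by rewrite mul2n -addnn -addn1 leq_add2l d_gt0 orbT.
Qed.

Lemma decay_le_dyadic J u : box (2 ^+ J) u ->
  decay u <= \1_(box 1) u
             + \sum_(k < J) ((2 ^+ d.+1) ^+ k)^-1 * \1_(box (2 ^+ k.+1)) u.
Proof.
have terms_ge0 n : 0 <= \sum_(k < n) ((2 ^+ d.+1) ^+ k)^-1 * (\1_(box (2 ^+ k.+1)) u : R).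
  by apply: sumr_ge0 => k _; rewrite mulr_ge0 ?invr_ge0 ?exprn_ge0 ?indicE ?ler0n.
elim: J => [|J IH] uJ.
  by rewrite big_ord0 addr0 indicE mem_set // decay_le1.
rewrite big_ord_recr /= addrA.
have [uJ' | nuJ'] := pselect (box (2 ^+ J) u).
  by rewrite (le_trans (IH uJ')) // lerDl mulr_ge0 ?invr_ge0 ?exprn_ge0 ?indicE ?ler0n.
rewrite [\1_(box (2 ^+ J.+1)) u]indicE mem_set // mulr1.
by rewrite (le_trans (decay_notin_box nuJ')) // lerDr addr_ge0 ?terms_ge0 // indicE.
Qed.

Lemma dyadic_sum_le (J : nat) :
  \sum_(k < J) ((2 ^+ d.+1) ^+ k)^-1 * ((2 ^ d) ^ k.+1)%:R <= 2 * (2 : R) ^+ d.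
Proof.
have term_eq (k : nat) : ((2 ^+ d.+1) ^+ k)^-1 * ((2 ^ d) ^ k.+1)%:R
                         = geometric (2 ^+ d) (2^-1 : R) k.
  rewrite /= !natrX exprVn exprSr exprMn [(_ ^+ d) ^+ k.+1]exprSr.
  by field; rewrite !expf_neq0.
under eq_bigr do rewrite term_eq.
have half_lt1 : `|2^-1 : R| < 1 by rewrite ger0_norm ?invf_lt1 ?ltr1n.
have := geometric_le_lim J (exprn_ge0 d (ler0n R 2)) _ half_lt1.
rewrite /series /= big_mkord (_ : 1 - 2^-1 = 2^-1 :> R); last by field.
by rewrite invrK mulrC; apply; rewrite invr_gt0.
Qed.

Lemma sum_decay_le (us : seq 'rV[R]_d) (N : nat) :
  (forall j, (count (mem (box (2 ^+ j))) us <= (2 ^ d) ^ j * N)%N) ->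
  \sum_(u <- us) decay u <= N%:R * (1 + 2 * 2 ^+ d).
Proof.
move=> count_le; have [J usJ] := box_pow2_exists_seq us.
apply: (@le_trans _ _ (\sum_(u <- us) (\1_(box 1) u
    + \sum_(k < J) ((2 ^+ d.+1) ^+ k)^-1 * \1_(box (2 ^+ k.+1)) u))).
  by rewrite big_seq [leRHS]big_seq; apply: ler_sum => u /usJ /decay_le_dyadic.
rewrite big_split /= exchange_big /= sum_indic_seq mulrDr mulr1 lerD //.
  by have := count_le 0%N; rewrite expr0 expn0 mul1n ler_nat.
under eq_bigr do rewrite -mulr_sumr sum_indic_seq.
apply: le_trans (ler_wpM2l (ler0n _ N) (dyadic_sum_le J)); rewrite mulr_sumr.
apply: ler_sum => k _; rewrite mulrCA -natrM ler_wpM2l ?invr_ge0 ?exprn_ge0 //.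
by rewrite ler_nat mulnC count_le.
Qed.
End DyadicDecay.

Definition translate_count_le (T : zmodType) (L S : set T) (N : nat) : Prop :=
  forall (x : T) (s : seq T), uniq s ->
    (forall z, z \in s -> L z /\ S (z - x)) -> (size s <= N)%N.

Section DiscreteSubgroup.
Variable T : topologicalZmodType.

Lemma open_sub_nbhs0 (U : set T) : nbhs 0 U ->
  exists V : set T, [/\ open V, V 0 & forall a b, V a -> V b -> U (a - b)].
Proof.
move=> U0; have : nbhs ((0, 0) : T * T) [set p | U (p.1 - p.2)].
  by apply: (@sub_continuous T (0, 0) U); rewrite /= subr0.
case=> -[A B] /= [/nbhs_interior A0 /nbhs_interior B0] AB.
exists (A° `&` B°); split; [exact: openI (@open_interior _ A) (@open_interior _ B)
  | by split; exact: nbhs_singleton |].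
by move=> a b [/interior_subset Aa _] [_ /interior_subset Bb]; exact: (AB (a, b)).
Qed.

Lemma open_translate (V : set T) (y : T) : open V -> open [set w | V (w - y)].
Proof.
move=> oV; apply: (@open_comp _ _ (fun w => w - y)) => // w _.
apply: (@continuous_comp _ _ _ (fun w => (w, y)) (fun p : T * T => p.1 - p.2)).
  by apply: cvg_pair; [exact: cvg_id | exact: cvg_cst].
exact: sub_continuous.
Qed.

Lemma compact_cover_translates (V S : set T) : open V -> V 0 -> compact S ->
  exists D : {fset T}, forall w, S w -> exists2 y, y \in D & V (w - y).
Proof.
move=> oV V0 cS.
have [D _ SD] : finite_subset_cover S (fun y => [set w | V (w - y)]) S.
  (* [compact_cover] is only stated for pointed spaces. *)
  pose Tp : ptopologicalType := HB.pack T (isPointed.Build T 0).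
  have : @compact Tp S := cS.
  rewrite compact_cover; apply.
  - by move=> y _; exact: open_translate.
  - by move=> y Sy; exists y => //=; rewrite subrr.
by exists D => w /SD [y /= yD Vy]; exists y.
Qed.

(* Two points of L lying in the same translate of V, where V - V is contained
   in U, differ by an element of U `&` L = [set 0]. *)
Lemma discrete_translate_count (L U : set T) :
  nbhs 0 U -> U `&` L = [set 0] -> (forall a b, L a -> L b -> L (a - b)) ->
  forall S : set T, compact S -> exists N, translate_count_le L S N.
Proof.
move=> U0 UL0 subL S cS.
have [V [oV V0 VVU]] := open_sub_nbhs0 U0.
have [D SD] := compact_cover_translates oV V0 cS.
exists (size (enum_fset D)) => x s us sLS.
have [c cP] : {c : T -> T & forall z, z \in s -> c z \in D /\ V (z - x - c z)}.
  apply: (@choice _ _ (fun z y => z \in s -> y \in D /\ V (z - x - y))) => z.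
  have [zs | _] := boolP (z \in s); last by exists 0.
  by have [_ /SD [y yD Vy]] := sLS z zs; exists y.
rewrite -(size_map c); apply: uniq_leq_size; last by move=> _ /mapP [z /cP [] ? _ ->].
rewrite map_inj_in_uniq // => z1 z2 z1s z2s c12.
have [[_ V1] [_ V2]] := (cP z1 z1s, cP z2 z2s).
have : (U `&` L) (z1 - z2).
  have subrBB (a b e : T) : a - e - (b - e) = a - b by rewrite opprB addrA subrK.
  split; first by have := VVU _ _ V1 V2; rewrite c12 !subrBB.
  by apply: subL; [case: (sLS z1 z1s) | case: (sLS z2 z2s)].
by rewrite UL0 => /subr0_eq.
Qed.
End DiscreteSubgroup.

Section ProductTopologicalZmodule.
Variables M N : topologicalZmodType.

Lemma prod_sub_continuous : continuous (fun x : (M * N) * (M * N) => x.1 - x.2).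
Proof.
move=> x; apply: cvg_pair => /=.
  apply: (@continuous_comp _ _ _ (fun p : (M * N) * (M * N) => (p.1.1, p.2.1))
    (fun q : M * M => q.1 - q.2)); last exact: sub_continuous.
  by apply: cvg_pair; apply: cvg_comp;
    [exact: cvg_fst | exact: cvg_fst | exact: cvg_snd | exact: cvg_fst].
apply: (@continuous_comp _ _ _ (fun p : (M * N) * (M * N) => (p.1.2, p.2.2))
  (fun q : N * N => q.1 - q.2)); last exact: sub_continuous.
by apply: cvg_pair; apply: cvg_comp;
  [exact: cvg_fst | exact: cvg_snd | exact: cvg_snd | exact: cvg_snd].
Qed.

(* The library declares products of topological abelian groups only for
   topological vector spaces; the alias [tzprod] carries the general instance. *)
Definition tzprod : Type := (M * N)%type.
HB.instance Definition _ := Topological.copy tzprod (M * N)%type.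
HB.instance Definition _ := GRing.Zmodule.copy tzprod (M * N)%type.
HB.instance Definition _ :=
  PreTopologicalNmodule_isTopologicalZmodule.Build tzprod prod_sub_continuous.
End ProductTopologicalZmodule.

Section LatticePointsInCylinders.
Variables (R : realType) (d : nat) (G H1 : zmodType).
Local Notation X := (G * ('rV[R]_d * H1))%type.
Implicit Types (L : set X) (K : set G) (W : set H1).

(* The points z with (z - x).2.1 in a given orthant e of the cube of radius 2 r
   lie in the translate by x + center e of the cylinder of radius r. *)
Lemma translate_count_le_box2 L K W (r : R) N : 0 <= r ->
  translate_count_le L (K `*` (box r `*` W)) N ->
  translate_count_le L (K `*` (box (2 * r) `*` W)) (2 ^ d * N).
Proof.
move=> r_ge0 countN x s us sLS.
pose orthant (z : X) : {ffun 'I_d -> bool} := [ffun i => 0 <= (z - x).2.1 ord0 i].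
pose center (e : {ffun 'I_d -> bool}) : X := (0, (\row_i (if e i then r else - r), 0)).
rewrite -sum1_size (partition_big orthant xpredT) //=.
have -> : (2 ^ d * N = \sum_(e : {ffun 'I_d -> bool}) N)%N.
  by rewrite sum_nat_const card_ffun card_bool card_ord.
apply: leq_sum => e _; rewrite sum1_count -size_filter.
apply: (countN (x + center e)); first exact: filter_uniq.
move=> z; rewrite mem_filter => /andP [/eqP <- zs].
have [Lz [Kz [Bz Wz]]] := sLS z zs; split => //.
rewrite /= !addr0 opprD !addrA; split => //; split => // i.
have := Bz i; change (z - x).2.1 with (z.2.1 - x.2.1).
rewrite !mxE /orthant ffunE !mxE; set u := _ - x.2.1 ord0 i.
by case: ifP => u_ge0; rewrite !ler_norml => /andP [? ?]; apply/andP; split; lra.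
Qed.

Lemma translate_count_le_box_pow2 L K W N :
  translate_count_le L (K `*` (box 1 `*` W)) N ->
  forall j, translate_count_le L (K `*` (box (2 ^+ j) `*` W)) ((2 ^ d) ^ j * N).
Proof.
move=> countN; elim=> [|j IH]; first by rewrite expr0 expn0 mul1n.
by rewrite exprS expnS -mulnA; apply: translate_count_le_box2; rewrite ?exprn_ge0.
Qed.

Lemma sum_decay_lattice_le L K W N (x : X) (s : seq X) :
  translate_count_le L (K `*` (box 1 `*` W)) N -> uniq s ->
  (forall z, z \in s -> [/\ L z, K (z - x).1 & W (z - x).2.2]) ->
  \sum_(z <- s) decay (z - x).2.1 <= N%:R * (1 + 2 * 2 ^+ d).
Proof.
move=> countN us sLKW; rewrite -(big_map (fun z => (z - x).2.1) xpredT (@decay R d)).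
apply: sum_decay_le => j; rewrite count_map -size_filter.
apply: (translate_count_le_box_pow2 countN (x := x)); first exact: filter_uniq.
move=> z; rewrite mem_filter => /andP [/set_mem Bz zs].
by have [Lz Kz Wz] := sLKW z zs.
Qed.
End LatticePointsInCylinders.

Section TensorEstimate.
Variables (R : realType) (d : nat) (G H1 : topologicalZmodType).
Local Notation X := (G * ('rV[R]_d * H1))%type.
Implicit Types (L : set X) (K : set G) (W : set H1).
Variables (phire phiim : 'rV[R]_d -> R) (psire psiim : H1 -> R).
Local Notation h := (tensor_abs phire phiim psire psiim).

Lemma sum_tensor_abs_le L K W N (p q : R) (t : G) (s : seq X) :
  translate_count_le L (K `*` (box 1 `*` W)) N -> csupp psire psiim `<=` W ->
  0 <= p -> 0 <= q -> uniq s -> (forall z, z \in s -> L z /\ K (z.1 - t)) ->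
  (forall z, z \in s -> cmod (psire z.2.2) (psiim z.2.2) <= p) ->
  (forall z, z \in s -> cmod ((1 + eucl2 z.2.1 ^+ d) * phire z.2.1)
                             ((1 + eucl2 z.2.1 ^+ d) * phiim z.2.1) <= q) ->
  \sum_(z <- s) h z.2 <= N%:R * (1 + 2 * 2 ^+ d) * (p * q).
Proof.
move=> countN suppW p_ge0 q_ge0 us sLK psi_le phi_le.
apply: (@le_trans _ _ (\sum_(z <- s | `[< W z.2.2 >]) p * q * decay z.2.1)).
  rewrite [leRHS]big_mkcond big_seq [leRHS]big_seq; apply: ler_sum => z zs /=.
  have [Wz | nWz] := asboolP (W z.2.2).
    rewrite /tensor_abs cmod_decay -mulrA mulrC [p * q]mulrC.
    rewrite ler_wpM2r ?decay_ge0 //.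
    by rewrite ler_pM ?cmod_ge0 ?phi_le ?psi_le.
  have [psire0 psiim0] := csupp_zero (contra_not (@suppW z.2.2) nWz).
  by rewrite /tensor_abs psire0 psiim0 cmod00 mulr0.
rewrite -big_filter -mulr_sumr [leRHS]mulrC ler_wpM2l ?mulr_ge0 //.
pose x : X := (t, (0, 0)).
have x_shift (z : X) : (z - x).2.1 = z.2.1 := subr0 z.2.1.
under eq_bigr => z _ do rewrite -x_shift.
apply: (sum_decay_lattice_le (x := x) countN (filter_uniq _ us)).
move=> z; rewrite mem_filter => /andP [/asboolP Wz zs].
by have [Lz Kz] := sLK z zs; split => //; rewrite [(z - x).2.2]subr0.
Qed.

Lemma omega_normK_le L K W N :
  translate_count_le L (K `*` (box 1 `*` W)) N -> csupp psire psiim `<=` W ->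
  (omega_normK L h K
   <= (N%:R * (1 + 2 * 2 ^+ d))%:E * csup_norm psire psiim
        * csup_norm (fun x => ((1 + eucl2 x ^+ d) * phire x)%R)
                    (fun x => ((1 + eucl2 x ^+ d) * phiim x)%R))%E.
Proof.
move=> countN suppW.
set P := csup_norm _ _; set Q := csup_norm _ _.
have P_ge0 : (0 <= P)%E := csup_norm_ge0 _ _ 0.
have Q_ge0 : (0 <= Q)%E := csup_norm_ge0 _ _ 0.
apply/ereal_supP => _ [t _ <-]; apply: esum_le_seq => s us sLK.
have [p [p_ge0 psi_le pP]] : exists p, [/\ 0 <= p,
    forall z, z \in s -> cmod (psire z.2.2) (psiim z.2.2) <= p & (p%:E <= P)%E].
  by apply: ereal_bound_seq => // z _; exact: csup_norm_ub.
have [q [q_ge0 phi_le qQ]] : exists q, [/\ 0 <= q,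
    forall z, z \in s -> cmod ((1 + eucl2 z.2.1 ^+ d) * phire z.2.1)
                               ((1 + eucl2 z.2.1 ^+ d) * phiim z.2.1) <= q
    & (q%:E <= Q)%E].
  by apply: ereal_bound_seq => // z _; exact: csup_norm_ub.
apply: (@le_trans _ _ ((N%:R * (1 + 2 * 2 ^+ d) * (p * q))%:E)).
  rewrite lee_fin (sum_tensor_abs_le (t := t) countN) // => z /sLK [Lz [k Kk <-]].
  by rewrite addrC addKr.
rewrite -muleA !EFinM lee_pmul ?lee_fin ?mulr_ge0 ?ler0n ?addr_ge0 ?exprn_ge0 //.
by rewrite lee_pmul ?lee_fin.
Qed.
End TensorEstimate.

Lemma omega_abs_le_normK (R : realType) (G : zmodType) (H : choiceType)
  (L : set (G * H)) (h : H -> R) (K : set G) :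
  (omega_abs L h K <= omega_normK L h K)%E.
Proof.
apply: ereal_sup_ubound; exists 0 => //; congr omega_abs.
apply/seteqP; split => [_ [k Kk <-] | k Kk]; first by rewrite add0r.
by exists k; rewrite ?add0r.
Qed.

Lemma lattice_translate_count (R : realType) (d : nat) (G H1 : topologicalZmodType)
  (L : set (G * ('rV[R]_d * H1))) (K : set G) (W : set H1) :
  lattice_in (@nbhs _ (G * ('rV[R]_d * H1))%type)
             (@compact (G * ('rV[R]_d * H1))%type) L ->
  compact K -> compact W -> exists N, translate_count_le L (K `*` (box 1 `*` W)) N.
Proof.
case=> L0 subL discrL _ cK cW; have [U [U0 UL0]] := discrL 0 L0.
have cS : compact (K `*` (box 1 `*` W) : set (G * ('rV[R]_d * H1))).
  exact: compact_setX cK (compact_setX (@box_compact _ _ 1) cW).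
exact: (@discrete_translate_count (tzprod G (tzprod 'rV[R]_d H1)) L U U0 UL0 subL _ cS).
Qed.

Theorem lemma5p2 (R : realType) (d : nat) (G H1 : topologicalZmodType)
  (Lat : set (G * ('rV[R]_d * H1))) :
  cut_and_project_scheme Lat ->
  (* (i) omega_{phi (x) psi} is a measure *)
  (forall (phire phiim : 'rV[R]_d -> R) (psire psiim : H1 -> R),
     schwartz phire phiim -> Cc psire psiim ->
     forall K : set G, compact K ->
       (omega_abs Lat (tensor_abs phire phiim psire psiim) K < +oo)%E)
  /\
  (* (ii) uniform estimate *)
  (forall (K : set G) (W : set H1), compact K -> compact W ->
     exists C : R,
       forall (phire phiim : 'rV[R]_d -> R) (psire psiim : H1 -> R),
         schwartz phire phiim -> Cc psire psiim ->
         csupp psire psiim `<=` W ->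
         (omega_normK Lat (tensor_abs phire phiim psire psiim) K
          <= C%:E * csup_norm psire psiim
               * csup_norm (fun x => ((1 + eucl2 x ^+ d) * phire x)%R)
                           (fun x => ((1 + eucl2 x ^+ d) * phiim x)%R))%E).
Proof.
case=> _ _ latL _ _; split => [phire phiim psire psiim Sphi Cpsi K cK | K W cK cW].
  have [_ _ cW] := Cpsi.
  have [N countN] := lattice_translate_count latL cK cW.
  have [Mpsi psi_le] := Cc_bounded Cpsi.
  have [Mphi phi_le] := schwartz_weighted_bounded Sphi.
  apply: le_lt_trans (le_trans (@omega_abs_le_normK _ _ _ Lat _ K)
                       (omega_normK_le _ _ countN (@subset_refl _ _))) _.
  by rewrite ltey_eq !fin_numM ?(csup_norm_fin_num 0 psi_le)
             ?(csup_norm_fin_num 0 phi_le).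
have [N countN] := lattice_translate_count latL cK cW.
by exists (N%:R * (1 + 2 * 2 ^+ d)) => phire phiim psire psiim _ _; exact: omega_normK_le.
Qed.
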